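(* Let $X$ be a countably infinite set. The lattice $\mathrm{Cl}_{loc}(X)$ of local clones on $X$ embeds as a partial order into the power set of $\omega$ ordered by inclusion. In particular, $\mathrm{Cl}_{loc}(X)$ contains no uncountable ascending chains and no uncountable descending chains.
   Context: A clone on $X$ is a set of finitary operations $X^n\to X$ ($n\ge1$) containing all projections $\pi^n_k(x_1,\dots,x_n)=x_k$ and closed under composition. Giving $X$ the discrete topology and $X^{X^n}$ the product topology, a clone is local if for each $n$ its set of $n$-ary operations is closed in $X^{X^n}$; equivalently, an $n$-ary operation $g$ belongs to the clone whenever for every finite $B\subseteq X^n$ some $n$-ary operation of the clone agrees with $g$ on $B$. $\mathrm{Cl}_{loc}(X)$ is the complete lattice of local clones on $X$ ordered by inclusion. An order embedding is a map $e$ with $a\le b\iff e(a)\le e(b)$. *)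

From Stdlib Require List.
From mathcomp Require Import all_boot.

Set Implicit Arguments.
Unset Strict Implicit.
Unset Printing Implicit Defensive.

(* An (n+1)-ary operation on X (arities n >= 1 are encoded as n.+1). *)
Definition op (X : Type) (n : nat) : Type := ('I_n.+1 -> X) -> X.

Definition opfam (X : Type) : Type := forall n : nat, op X n -> Prop.

Definition proj (X : Type) (n : nat) (k : 'I_n.+1) : op X n := fun x => x k.

Definition compose (X : Type) (m n : nat) (f : op X m) (g : 'I_m.+1 -> op X n)
  : op X n := fun x => f (fun i => g i x).

Definition is_clone (X : Type) (C : opfam X) : Prop :=
  (forall n (k : 'I_n.+1), C n (proj k)) /\
  (forall m n (f : op X m) (g : 'I_m.+1 -> op X n),
      C m f -> (forall i, C n (g i)) -> C n (compose f g)).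

Definition is_local (X : Type) (C : opfam X) : Prop :=
  forall n (g : op X n),
    (forall B : list ('I_n.+1 -> X),
        exists f, C n f /\ (forall b, List.In b B -> f b = g b)) ->
    C n g.

Record local_clone (X : Type) := LocalClone {
  lc_ops :> opfam X;
  lc_clone : is_clone lc_ops;
  lc_local : is_local lc_ops }.

Definition lc_le (X : Type) (A B : local_clone X) : Prop :=
  forall n f, @lc_ops X A n f -> @lc_ops X B n f.

Definition countably_infinite (X : Type) : Prop :=
  exists (f : nat -> X) (g : X -> nat),
    (forall k, g (f k) = k) /\ (forall x, f (g x) = x).

Definition order_embedding_into_powerset_omega (X : Type)
  (e : local_clone X -> (nat -> Prop)) : Prop :=
  forall A B : local_clone X, lc_le A B <-> (forall k, e A k -> e B k).

Definition is_chain (X : Type) (S : local_clone X -> Prop) : Prop :=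
  forall A B, S A -> S B -> lc_le A B \/ lc_le B A.

(* ascending chain: a chain well-ordered by ⊆ (every nonempty subfamily has a least element) *)
Definition ascending_chain (X : Type) (S : local_clone X -> Prop) : Prop :=
  is_chain S /\
  forall T : local_clone X -> Prop, (forall A, T A -> S A) -> (exists A, T A) ->
    exists A, T A /\ forall B, T B -> lc_le A B.

(* descending chain: a chain well-ordered by ⊇ *)
Definition descending_chain (X : Type) (S : local_clone X -> Prop) : Prop :=
  is_chain S /\
  forall T : local_clone X -> Prop, (forall A, T A -> S A) -> (exists A, T A) ->
    exists A, T A /\ forall B, T B -> lc_le B A.

(* S is countable: injects into nat (elements identified when they are equal clones,
   i.e. mutually included) *)
Definition countable_family (X : Type) (S : local_clone X -> Prop) : Prop :=
  exists c : local_clone X -> nat,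
    forall A B, S A -> S B -> c A = c B -> lc_le A B /\ lc_le B A.

(* A local clone is determined by its finite restrictions, i.e. by the countably many
   finite interpolation problems "some n-ary operation of C takes the values y_j at the
   points b_j" that it solves; sending a clone to the set of codes of such problems is an
   order embedding into the power set of omega.  In a chain well ordered by inclusion,
   each element A other than the top has a successor, and a number in the code of the
   successor but not in that of A labels A injectively.  Complementing the codes turns
   descending chains into ascending ones. *)
From mathcomp Require Import all_boot.
From Stdlib Require Import Classical ClassicalEpsilon FunctionalExtensionality.

Set Implicit Arguments.
Unset Strict Implicit.
Unset Printing Implicit Defensive.

Section WellOrderedChains.
Variables (T : Type) (le : T -> T -> Prop) (e : T -> nat -> Prop).
Hypothesis le_embedding : forall A B, le A B <-> (forall k, e A k -> e B k).

Definition separator (S : T -> Prop) (A : T) (k : nat) : Prop :=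
  ~ e A k /\ forall B, S B -> ~ le B A -> e B k.

Lemma separator_exists (S : T -> Prop) (A B : T) :
  (forall U : T -> Prop, (forall A, U A -> S A) -> (exists A, U A) ->
     exists A, U A /\ forall B, U B -> le A B) ->
  S B -> ~ le B A -> exists k, separator S A k.
Proof.
move=> wf SB nBA.
have [A' [[SA' nA'A] leastA']] :
    exists A', (S A' /\ ~ le A' A) /\ forall B', S B' /\ ~ le B' A -> le A' B'.
  by apply: wf; [move=> ? [] | exists B].
have [k [eA'k neAk]] : exists k, e A' k /\ ~ e A k.
  apply: NNPP => none; apply: nA'A; apply/le_embedding => k eA'k.
  by apply: NNPP => neAk; apply: none; exists k.
exists k; split=> // B' SB' nB'A.
by move/le_embedding: (leastA' B' (conj SB' nB'A)); apply.
Qed.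

Lemma wf_chain_countable (S : T -> Prop) :
  (forall A B, S A -> S B -> le A B \/ le B A) ->
  (forall U : T -> Prop, (forall A, U A -> S A) -> (exists A, U A) ->
     exists A, U A /\ forall B, U B -> le A B) ->
  exists c : T -> nat, forall A B, S A -> S B -> c A = c B -> le A B /\ le B A.
Proof.
move=> chain wf.
pose c A := if excluded_middle_informative (exists k, separator S A k) is left sep
            then (proj1_sig (constructive_indefinite_description _ sep)).+1 else 0.
have c_antisym A B : S A -> S B -> c A = c B -> le A B -> le B A.
  move=> SA SB cAB leAB; apply: NNPP => nBA.
  move: cAB; rewrite /c.
  case: excluded_middle_informative => [sepA | []]; last exact: separator_exists nBA.
  case: constructive_indefinite_description => kA [_ sepAk] /=.
  case: excluded_middle_informative => [sepB|//].
  case: constructive_indefinite_description => kB [neBk _] /= [kAB].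
  by apply: neBk; rewrite -kAB; apply: sepAk.
exists c => A B SA SB cAB.
by case: (chain A B SA SB) => le_AB; split=> //; apply: c_antisym.
Qed.

End WellOrderedChains.

Lemma powerset_embedding_dual (T : Type) (le : T -> T -> Prop) (e : T -> nat -> Prop) :
  (forall A B, le A B <-> (forall k, e A k -> e B k)) ->
  forall A B, le B A <-> (forall k, ~ e A k -> ~ e B k).
Proof.
move=> le_embedding A B; rewrite le_embedding; split.
  by move=> eBA k neAk eBk; apply/neAk/eBA.
by move=> neAB k eBk; apply: NNPP => neAk; exact: neAB k neAk eBk.
Qed.

Section CloneCode.
Variables (X : Type) (fX : nat -> X) (gX : X -> nat).
Hypothesis gXK : cancel gX fX.

Definition tuple_code n (b : 'I_n.+1 -> X) : seq nat := [seq gX (b i) | i <- enum 'I_n.+1].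

Definition tuple_decode n (l : seq nat) : 'I_n.+1 -> X := fun i => fX (nth 0 l i).

Lemma tuple_codeK n (b : 'I_n.+1 -> X) : tuple_decode (tuple_code b) = b.
Proof.
apply: functional_extensionality => i.
by rewrite /tuple_decode (nth_map i) ?size_enum_ord // nth_ord_enum gXK.
Qed.

(* An interpolation problem: an arity and a finite list of (coded) argument/value pairs. *)
Definition interpolates (C : local_clone X) (t : nat * seq (seq nat * nat)) : Prop :=
  exists h, @lc_ops X C t.1 h /\ forall p, List.In p t.2 -> h (tuple_decode p.1) = fX p.2.

Definition clone_code (C : local_clone X) (k : nat) : Prop :=
  if unpickle k is Some t then interpolates C t else False.

Lemma clone_code_mono (A B : local_clone X) :
  lc_le A B -> forall k, clone_code A k -> clone_code B k.
Proof.
move=> leAB k; rewrite /clone_code; case: unpickle => // t [h [Ah hvals]].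
by exists h; split=> //; apply: leAB.
Qed.

Lemma clone_code_reflect (A B : local_clone X) :
  (forall k, clone_code A k -> clone_code B k) -> lc_le A B.
Proof.
move=> codeAB n f Af; apply: lc_local => Bs.
pose problem := (n, [seq (tuple_code b, gX (f b)) | b <- Bs]).
have : clone_code B (pickle problem).
  apply: codeAB; rewrite /clone_code pickleK.
  exists f; split=> //= p /List.in_map_iff [b [<- _]] /=.
  by rewrite tuple_codeK gXK.
rewrite /clone_code pickleK => -[h [Bh hvals]].
exists h; split=> // b inBs.
have := hvals (tuple_code b, gX (f b)); rewrite /= tuple_codeK gXK; apply.
by apply/List.in_map_iff; exists b.
Qed.

Lemma clone_code_embedding : order_embedding_into_powerset_omega clone_code.
Proof.
by move=> A B; split; [apply: clone_code_mono | apply: clone_code_reflect].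
Qed.

End CloneCode.

Theorem proposition2p6 (X : Type) (hX : countably_infinite X) :
  (exists e : local_clone X -> (nat -> Prop),
      order_embedding_into_powerset_omega e) /\
  (forall S : local_clone X -> Prop, ascending_chain S -> countable_family S) /\
  (forall S : local_clone X -> Prop, descending_chain S -> countable_family S).
Proof.
case: hX => fX [gX [_ gXK]].
have embedding : forall A B : local_clone X,
    lc_le A B <-> (forall k, clone_code fX A k -> clone_code fX B k).
  exact: clone_code_embedding gXK.
split; first by exists (clone_code fX).
split=> S [chain wf].
  exact: (wf_chain_countable embedding chain wf).
have dual_chain A B : S A -> S B -> lc_le B A \/ lc_le A B.
  by move=> SA SB; case: (chain A B SA SB); [right | left].
have [c c_inj] := wf_chain_countable (powerset_embedding_dual embedding) dual_chain wf.
by exists c => A B SA SB cAB; have [] := c_inj A B SA SB cAB.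
Qed.
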